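(* There is a comeager set $C\subseteq(\mathbb R^{\mathbb N})^{\mathbb N}$ such that $({=^{+2}}\restriction C)\le_B{=^+}$.
   Context: For an equivalence relation $E$ on $X$, the Friedman–Stanley jump $E^+$ is the equivalence relation on $X^{\mathbb N}$ given by $x\mathrel{E^+}y\iff\{[x(i)]_E:i\in\mathbb N\}=\{[y(i)]_E:i\in\mathbb N\}$. Here $=^+$ is $(=_{\mathbb R})^+$ on $\mathbb R^{\mathbb N}$ and $=^{+2}=(=^+)^+$ on $(\mathbb R^{\mathbb N})^{\mathbb N}$, with the product topologies. *)

From HB Require Import structures.
From mathcomp Require Import all_boot all_order all_algebra.
From mathcomp Require Import all_classical all_reals all_analysis.
Set Implicit Arguments. Unset Strict Implicit. Unset Printing Implicit Defensive.
Import Order.TTheory GRing.Theory Num.Theory.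
Import numFieldTopology.Exports numFieldNormedType.Exports.
Local Open Scope classical_set_scope.

Definition fs_jump (X : Type) (E : X -> X -> Prop) : (nat -> X) -> (nat -> X) -> Prop :=
  fun x y => range (fun i => [set z | E (x i) z]) = range (fun i => [set z | E (y i) z]).

Definition Rtop (R : realType) : topologicalType := Real.sort R.

Definition RN (R : realType) : topologicalType :=
  @prod_topology nat (fun _ : nat => Rtop R).
Definition RNN (R : realType) : topologicalType :=
  @prod_topology nat (fun _ : nat => RN R).

Definition eq_plus (R : realType) : RN R -> RN R -> Prop := fs_jump (@eq R).
Definition eq_plus2 (R : realType) : RNN R -> RNN R -> Prop := fs_jump (@eq_plus R).

Definition comeager (T : topologicalType) (C : set T) : Prop :=
  exists U : nat -> set T, (forall n, open (U n) /\ dense (U n)) /\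
    \bigcap_n U n `<=` C.

Definition borel_set (T : topologicalType) (A : set T) : Prop :=
  <<s [set: T], open >> A.
Definition borel_fun (T U : topologicalType) (f : T -> U) : Prop :=
  forall V : set U, open V -> borel_set (f @^-1` V).

From mathcomp Require Import all_boot all_order all_algebra.
From mathcomp Require Import all_classical all_reals all_analysis.
From mathcomp Require Import ring lra.
Import Order.TTheory GRing.Theory Num.Theory.
Import numFieldTopology.Exports numFieldNormedType.Exports.
Set Implicit Arguments. Unset Strict Implicit. Unset Printing Implicit Defensive.
Local Open Scope classical_set_scope.
Local Open Scope ring_scope.

(* On the comeager set of x whose rows have pairwise disjoint sets of entries, the
   =^{+2}-class of x is determined by the set of pairs (x i j, x i l) of entries sharing a
   row: each row is recovered as the set of entries paired with any one of its entries.
   Coding a pair of reals by one real through an injective Borel map (the ternary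
   expansion of the two interleaved rational cuts) and listing all triples (i, j, l)
   therefore reduces =^{+2} to =^+ on that set.  The set is comeager since each condition
   x i j <> x k l, for i <> k, is open and dense. *)

Lemma range_eqP (I T : Type) (a b : I -> T) :
  range a = range b <-> (forall i, exists k, a i = b k) /\ (forall k, exists i, a i = b k).
Proof.
split=> [ab|[ab ba]].
  split=> [i|k].
    have [k _ bk] : range b (a i) by rewrite -ab; exists i.
    by exists k.
  have [i _ ai] : range a (b k) by rewrite ab; exists k.
  by exists i.
apply/seteqP; split=> _ [i _ <-].
  by have [k ->] := ab i; exists k.
by have [k <-] := ba i; exists k.
Qed.

Lemma range_comp_inj (I T U : Type) (g : T -> U) (a b : I -> T) : injective g ->
  range (g \o a) = range (g \o b) <-> range a = range b.
Proof.
move=> g_inj; rewrite !range_eqP; split=> [[ab ba]|[ab ba]]; split.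
- by move=> i; have [k /g_inj] := ab i; exists k.
- by move=> k; have [i /g_inj] := ba k; exists i.
- by move=> i; have [k /= ->] := ab i; exists k.
- by move=> k; have [i /= <-] := ba k; exists i.
Qed.

Section fs_jump_equivalence.
Variables (T : Type) (E : T -> T -> Prop).
Hypotheses (E_refl : forall u, E u u) (E_sym : forall {u v}, E u v -> E v u)
  (E_trans : forall {u v w}, E u v -> E v w -> E u w).

Lemma class_eqP u v : [set z | E u z] = [set z | E v z] <-> E u v.
Proof.
split=> [uv|uv]; first by have : [set z | E v z] v := E_refl v; rewrite -uv.
by apply/seteqP; split=> z /=; [exact: E_trans (E_sym uv) | exact: E_trans uv].
Qed.

Lemma fs_jumpP a b : fs_jump E a b <->
  (forall i, exists k, E (a i) (b k)) /\ (forall k, exists i, E (a i) (b k)).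
Proof.
by rewrite /fs_jump range_eqP; setoid_rewrite class_eqP.
Qed.

End fs_jump_equivalence.

Lemma eq_plusP (R : realType) (a b : RN R) : eq_plus a b <-> range a = range b.
Proof. by rewrite range_eqP; apply: fs_jumpP => // u v w -> ->. Qed.

Lemma eq_plus2P (R : realType) (x y : RNN R) :
  eq_plus2 x y <-> range (fun i => range (x i)) = range (fun i => range (y i)).
Proof.
rewrite /eq_plus2; have -> : @eq_plus R = fun a b => range a = range b.
  by apply/funext => a; apply/funext => b; apply/propext/eq_plusP.
by rewrite range_eqP; apply: fs_jumpP => // u v w -> ->.
Qed.

Section squares.
Variable T : Type.
Implicit Types A B : nat -> set T.

Lemma square_sub A B i k a : trivIset setT B ->
  \bigcup_j (A j `*` A j) `<=` \bigcup_j (B j `*` B j) -> A i a -> B k a -> A i `<=` B k.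
Proof.
move=> trivB AB Aia Bka b Aib.
have [k' _ [/= Bk'a Bk'b]] : (\bigcup_j (B j `*` B j)) (a, b) by apply: AB; exists i.
by have <- : k' = k by apply: trivB => //; exists a.
Qed.

Lemma bigcup_squares_class A B : (forall i, A i !=set0) ->
  trivIset setT A -> trivIset setT B ->
  \bigcup_j (A j `*` A j) = \bigcup_j (B j `*` B j) -> forall i, exists k, A i = B k.
Proof.
move=> A0 trivA trivB AB i; have [a Aia] := A0 i.
have [k _ [Bka _]] : (\bigcup_j (B j `*` B j)) (a, a) by rewrite -AB; exists i.
exists k; apply/seteqP; split; first by apply: square_sub trivB _ Aia Bka; rewrite AB.
by apply: square_sub trivA _ Bka Aia; rewrite AB.
Qed.

Lemma bigcup_squares_eqP A B : (forall i, A i !=set0) -> (forall i, B i !=set0) ->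
  trivIset setT A -> trivIset setT B ->
  \bigcup_j (A j `*` A j) = \bigcup_j (B j `*` B j) <-> range A = range B.
Proof.
move=> A0 B0 trivA trivB; split=> [AB|AB]; last first.
  by rewrite -!(bigcup_image setT _ (fun S => S `*` S)) AB.
apply/range_eqP; split; first exact: bigcup_squares_class.
by move=> k; have [i ->] := @bigcup_squares_class B A B0 trivB trivA (esym AB) k; exists i.
Qed.

End squares.

Lemma comeager_bigcap (T : topologicalType) (I : countType) (U : I -> set T) (C : set T) :
  (forall i, open (U i) /\ dense (U i)) -> \bigcap_i U i `<=` C -> comeager C.
Proof.
move=> oU UC; exists (fun n => if unpickle n is Some i then U i else setT); split.
  move=> n; case: unpickle => [i|]; first exact: oU.
  by split=> [|O O0 _]; [exact: openT | rewrite setIT].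
by move=> x Ux; apply: UC => i _; have := Ux (pickle i); rewrite pickleK; exact.
Qed.

Section disjoint_rows.
Variable R : realType.

Definition disjoint_rows : set (RNN R) := [set x | trivIset setT (fun i => range (x i))].

Lemma continuous_entry i j : continuous (fun x : RNN R => x i j : Rtop R).
Proof.
move=> x; apply: (@continuous_comp (RNN R) (RN R) (Rtop R)
  (@proj _ (fun=> RN R) i) (@proj _ (fun=> Rtop R) j)); exact: proj_continuous.
Qed.

Lemma open_entry_neq i j k l : open [set x : RNN R | x i j != x k l].
Proof.
have -> : [set x : RNN R | x i j != x k l] =
    (fun x : RNN R => x i j - x k l) @^-1` [set z | z != 0].
  by apply/seteqP; split=> x /=; rewrite subr_eq0.
apply: open_comp; last exact: open_neq.
move=> x _; apply: continuousB; exact: continuous_entry.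
Qed.

Definition set_entry (x : RNN R) i j (t : R) : RNN R :=
  @dfwith _ (fun=> RN R) x i (@dfwith _ (fun=> Rtop R) (x i) j t).

Lemma continuous_set_entry x i j : continuous (set_entry x i j : Rtop R -> RNN R).
Proof.
move=> t; apply: (@continuous_comp _ (RN R)); exact: dfwith_continuous.
Qed.

Lemma set_entry_id x i j : set_entry x i j (x i j) = x.
Proof.
rewrite /set_entry; apply: functional_extensionality_dep => i'; case: dfwithP => //.
by apply: functional_extensionality_dep => j'; case: dfwithP.
Qed.

Lemma set_entry_in x i j t : set_entry x i j t i j = t.
Proof. by rewrite /set_entry !dfwithin. Qed.

Lemma set_entry_out x i j t k l : i != k -> set_entry x i j t k l = x k l.
Proof. by move=> ik; rewrite /set_entry dfwithout. Qed.

Lemma dense_entry_neq i j k l : i != k -> dense [set x : RNN R | x i j != x k l].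
Proof.
move=> ik O [x Ox] oO.
have oO' : open (set_entry x i j @^-1` O : set (Rtop R)).
  by apply: open_comp oO => t _; exact: continuous_set_entry.
have [t [/= Ot /eqP tx]] : (set_entry x i j @^-1` O) `&` ~` [set x k l] !=set0.
  by apply: dense_set1C oO'; exists (x i j); rewrite /= set_entry_id.
by exists (set_entry x i j t); split; rewrite //= set_entry_in set_entry_out.
Qed.

Lemma comeager_disjoint_rows : comeager disjoint_rows.
Proof.
apply: (@comeager_bigcap _ _ (fun '((i, j), (k, l)) =>
  if i == k then setT else [set x : RNN R | x i j != x k l])).
  case=> -[i j] [k l]; case: eqVneq => [_|ik].
    by split=> [|O O0 _]; [exact: openT | rewrite setIT].
  by split; [exact: open_entry_neq | exact: dense_entry_neq].
move=> x Ux i k _ _ [_ [[j _ <-] [l _ xkl]]].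
by have := Ux ((i, j), (k, l)) I; case: eqP => // _; rewrite /= xkl eqxx.
Qed.

End disjoint_rows.

Section ternary_expansion.
Context {R : realType}.
Implicit Types d : nat -> bool.

Definition ternary_sum d N : R := \sum_(0 <= k < N) (d k)%:R * 3^-1 ^+ k.+1.

Definition ternary d : R := limn (ternary_sum d).

Lemma ternary_sumS d N : ternary_sum d N.+1 = ternary_sum d N + (d N)%:R * 3^-1 ^+ N.+1.
Proof. by rewrite /ternary_sum big_nat_recr. Qed.

Lemma nondecreasing_ternary_sum d : nondecreasing_seq (ternary_sum d).
Proof.
apply/nondecreasing_seqP => N; rewrite ternary_sumS lerDl.
by rewrite mulr_ge0 ?exprn_ge0 ?invr_ge0.
Qed.

(* Digits beyond N add at most half the weight 3^-N, so a first difference decides the order. *)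
Lemma nonincreasing_ternary_sum_tail d :
  nonincreasing_seq (fun N => ternary_sum d N + 3^-1 ^+ N / 2).
Proof.
apply/nonincreasing_seqP => N; rewrite ternary_sumS -addrA lerD2l.
have -> : 3^-1 ^+ N / 2 = 3^-1 ^+ N.+1 + 3^-1 ^+ N.+1 / 2 :> R by rewrite exprS; field.
by rewrite lerD2r; case: (d N); rewrite ?mul1r ?mul0r ?exprn_ge0 ?invr_ge0.
Qed.

Lemma ternary_sum_le d N M : ternary_sum d N <= ternary_sum d M + 3^-1 ^+ M / 2.
Proof.
have [NM|MN] := leqP N M.
  by rewrite ler_wpDr //; apply: nondecreasing_ternary_sum.
apply: le_trans (_ : _ <= ternary_sum d N + 3^-1 ^+ N / 2) _; first by rewrite lerDl.
by apply: nonincreasing_ternary_sum_tail; exact: ltnW.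
Qed.

Lemma ternary_sum_cvg d : cvgn (ternary_sum d).
Proof.
apply: nondecreasing_is_cvgn; first exact: nondecreasing_ternary_sum.
by exists (ternary_sum d 0 + 3^-1 ^+ 0 / 2) => _ [N _ <-]; exact: ternary_sum_le.
Qed.

Lemma ternary_sum_le_ternary d N : ternary_sum d N <= ternary d.
Proof.
by apply: nondecreasing_cvgn_le; [exact: nondecreasing_ternary_sum | exact: ternary_sum_cvg].
Qed.

Lemma ternary_le d M : ternary d <= ternary_sum d M + 3^-1 ^+ M / 2.
Proof.
apply: limr_le; first exact: ternary_sum_cvg.
by apply: nearW => N; exact: ternary_sum_le.
Qed.

Lemma ternary_lt d d' m : (forall k, (k < m)%N -> d k = d' k) ->
  d' m = false -> d m = true -> ternary d' < ternary d.
Proof.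
move=> dd' d'm dm.
have eq_m : ternary_sum d' m = ternary_sum d m.
  rewrite /ternary_sum big_nat_cond [RHS]big_nat_cond; apply: eq_bigr => k /andP[/andP[_ km] _].
  by rewrite dd'.
apply: le_lt_trans (ternary_le d' m.+1) _; apply: lt_le_trans (ternary_sum_le_ternary d m.+1).
rewrite !ternary_sumS eq_m d'm dm mul0r addr0 mul1r ltrD2l.
by rewrite ltr_pdivrMr // ltr_pMr ?ltr1n // exprn_gt0 // invr_gt0.
Qed.

Lemma ternary_inj : injective ternary.
Proof.
move=> d d' dd'; apply/funext => k0; apply/eqP/negPn/negP => neq.
have ex_neq : exists k, d k != d' k by exists k0.
case: (ex_minnP ex_neq) => m neq_m min_m.
have below k : (k < m)%N -> d k = d' k.
  by move=> km; apply/eqP/negPn/negP => /min_m; rewrite leqNgt km.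
move: neq_m; case dm: (d m); case d'm: (d' m) => // _.
  by have := ternary_lt below d'm dm; rewrite dd' ltxx.
have below' k : (k < m)%N -> d' k = d k by move=> /below ->.
by have := ternary_lt below' dm d'm; rewrite dd' ltxx.
Qed.

Lemma measurable_ternary dT (T : measurableType dT) (D : T -> nat -> bool) :
  (forall k, measurable [set t | D t k]) -> measurable_fun setT (fun t => ternary (D t)).
Proof.
move=> mD; apply: (measurable_realfun.measurable_fun_cvg
  (h := fun N t => ternary_sum (D t) N)).
  move=> N; apply: measurable_sum => k; apply: measurable_realfun.measurable_funM => //.
  have -> : (fun t => (D t k)%:R : R) = \1_[set t | D t k].
    apply/funext => t; rewrite indicE.
    by case: (boolP (D t k)) => h; [rewrite mem_set | rewrite memNset //; exact/negP].
  exact: measurable_realfun.measurable_indic.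
by move=> t _; exact: ternary_sum_cvg.
Qed.

End ternary_expansion.

Section pair_code.
Context {R : realType}.

Definition rat_enum (m : nat) : R := ratr (odflt 0 (unpickle m)).

Lemma rat_enum_between (u v : R) : u < v -> exists m, u < rat_enum m < v.
Proof.
move=> uv; have [q] := rat_in_itvoo uv; rewrite in_itv /= => quv.
by exists (pickle q); rewrite /rat_enum pickleK.
Qed.

Lemma rat_enum_cut_inj (u v : R) : (forall m, (rat_enum m < u) = (rat_enum m < v)) -> u = v.
Proof.
move=> cut_uv; apply/eqP; case: ltgtP => // [uv|vu].
  by have [m /andP[um mv]] := rat_enum_between uv; move: (cut_uv m); rewrite mv (lt_gtF um).
by have [m /andP[vm mu]] := rat_enum_between vu; move: (cut_uv m); rewrite mu (lt_gtF vm).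
Qed.

Definition cut_digits (p : R * R) (k : nat) : bool :=
  rat_enum k./2 < if odd k then p.2 else p.1.

Lemma cut_digits_inj : injective cut_digits.
Proof.
move=> [u v] [u' v'] /= e; congr pair; apply: rat_enum_cut_inj => m.
  by have := congr1 (fun f => f m.*2) e; rewrite /cut_digits odd_double doubleK.
by have := congr1 (fun f => f m.*2.+1) e; rewrite /cut_digits /= odd_double uphalf_double.
Qed.

Definition pair_code (p : R * R) : R := ternary (cut_digits p).

Lemma pair_code_inj : injective pair_code.
Proof. by move=> p q /ternary_inj /cut_digits_inj. Qed.

Lemma measurable_pair_code dT (T : measurableType dT) (u v : T -> R) :
  measurable_fun setT u -> measurable_fun setT v ->
  measurable_fun setT (fun t => pair_code (u t, v t)).
Proof.
have measurable_gt (w : T -> R) r : measurable_fun setT w -> measurable [set t | r < w t].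
  move=> mw; rewrite -[X in measurable X]setTI.
  have -> : [set t | r < w t] = w @^-1` `]r, +oo[.
    by apply/seteqP; split=> t; rewrite /= in_itv /= andbT.
  exact: mw.
move=> mu mv; apply: measurable_ternary => k; rewrite /cut_digits.
by case: (odd k); exact: measurable_gt.
Qed.

End pair_code.

Section borel_functions.
Variable R : realType.

Definition RNN_borel := @g_sigma_algebraType (nat -> nat -> R) (@open (RNN R)).

Lemma measurable_entry i j : measurable_fun setT (fun x : RNN_borel => x i j).
Proof.
apply: (measurability _ (measurable_realfun.RGenOpens.measurableE R)).
move=> _ [_ [a [b ->]] <-]; rewrite setTI; apply: sub_sigma_algebra.
by apply: open_comp => [x _|]; [exact: continuous_entry | exact: interval_open].
Qed.

Definition rat_box (s : seq (nat * rat * rat)) : set (RN R) :=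
  [set u | all (fun t => ratr t.1.2 < u t.1.1 < ratr t.2) s].

Lemma open_rat_itv (A : set (Rtop R)) (r : R) : open A -> A r ->
  exists a b : rat, ratr a < r < ratr b /\ (forall y, ratr a < y < ratr b -> A y).
Proof.
move=> oA Ar; have /nbhs_ballP [e /= e0 eA] : nbhs r A by rewrite openE in oA; exact: oA.
have [a] : exists a : rat, ratr a \in `]r - e, r[ by apply: rat_in_itvoo; rewrite gtrBl.
have [b] : exists b : rat, ratr b \in `]r, r + e[ by apply: rat_in_itvoo; rewrite ltrDl.
rewrite !in_itv /= => /andP[rb be] /andP[ea ar].
exists a, b; split=> [|y /andP[ay yb]]; first by rewrite ar rb.
apply: eA; rewrite -ball_normE /ball_ /= ltr_norml; apply/andP; split; lra.
Qed.

Lemma rat_box_cylinders (L : seq (set (RN R))) (v : RN R) :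
  (forall W, W \in L -> W v /\ exists n (A : set (Rtop R)), open A /\ W = [set u | A (u n)]) ->
  exists s, rat_box s v /\ rat_box s `<=` [set u | forall W, W \in L -> W u].
Proof.
elim: L => [|W L IH] cylL; first by exists [::].
have [|s [sv sL]] := IH; first by move=> W' W'L; apply: cylL; rewrite in_cons W'L orbT.
have [Wv [n [A [oA WE]]]] := cylL W (mem_head _ _).
have [a [b [abv abA]]] : exists a b : rat, ratr a < v n < ratr b /\
    (forall y, ratr a < y < ratr b -> A y) by apply: open_rat_itv => //; rewrite WE in Wv.
exists ((n, a, b) :: s); split; first by rewrite /rat_box /= abv.
move=> u /andP[/= abu su] W'; rewrite in_cons => /orP[/eqP ->|]; last exact: sL.
by rewrite WE; exact: abA.
Qed.

Lemma rat_box_base (V : set (RN R)) (v : RN R) : open V -> V v ->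
  exists s, rat_box s v /\ rat_box s `<=` V.
Proof.
move=> oV Vv; have : nbhs v V by move: oV; rewrite openE; apply.
(* A neighbourhood in the product topology contains a finite intersection [W] of open
   cylinders containing [v]. *)
move=> [/= X [[/= B + <-] [W BW Wv BV]]] => /(_ W BW) [/= F Fcyl WF].
have [|s [sv sF]] := @rat_box_cylinders (finmap.enum_fset F) v.
  move=> W' W'F; split; first by move: Wv; rewrite -WF; apply.
  by have /set_mem [n _ [A oA <-]] := Fcyl _ W'F; exists n, A.
exists s; split=> // u /sF Fu; apply: BV; exists W => //.
by rewrite -WF => W' /= W'F; exact: Fu.
Qed.

Lemma measurable_preimage_rat_box (f : RNN R -> RN R) s :
  (forall n, measurable_fun setT (fun x : RNN_borel => f x n)) ->
  measurable (f @^-1` rat_box s : set RNN_borel).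
Proof.
move=> mf; elim: s => [|[[n a] b] s IH].
  by rewrite [X in measurable X](_ : _ = setT) //; apply/seteqP.
have -> : f @^-1` rat_box ((n, a, b) :: s) =
    (fun x => f x n) @^-1` `](ratr a : R), ratr b[ `&` f @^-1` rat_box s.
  by apply/seteqP; split=> x; rewrite /rat_box /= in_itv /= => /andP.
apply: measurableI => //; rewrite -[X in measurable X]setTI; exact: mf.
Qed.

Lemma borel_fun_RN (f : RNN R -> RN R) :
  (forall n, measurable_fun setT (fun x : RNN_borel => f x n)) -> borel_fun f.
Proof.
move=> mf V oV.
pose E m : set RNN_borel := if unpickle m is Some s then
  if pselect (rat_box s `<=` V) then f @^-1` rat_box s else set0 else set0.
have -> : f @^-1` V = \bigcup_m E m.
  apply/seteqP; split=> [x /= Vfx|x [m _]]; last first.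
    by rewrite /E; case: unpickle => // s; case: pselect => // sV /sV.
  have [s [sfx sV]] := rat_box_base oV Vfx.
  by exists (pickle s) => //; rewrite /E pickleK; case: pselect.
apply: (@bigcupT_measurable _ RNN_borel) => m; rewrite /E.
case: unpickle => [s|]; last exact: measurable0.
by case: pselect => ?; [exact: measurable_preimage_rat_box | exact: measurable0].
Qed.

End borel_functions.

Section row_pairs.
Variable R : realType.

Definition row_pairs (x : RNN R) (n : nat) : R * R :=
  let: (i, j, l) := odflt (0, 0, 0)%N (unpickle n) in (x i j, x i l).

Definition row_pair_code (x : RNN R) : RN R := pair_code \o row_pairs x.

Lemma range_row_pairs x : range (row_pairs x) = \bigcup_i (range (x i) `*` range (x i)).
Proof.
apply/seteqP; split=> [_ [n _ <-]|[u v] [i _ [/= [j _ <-] [l _ <-]]]].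
  rewrite /row_pairs; case: (odflt _ _) => -[i j] l.
  by exists i.
by exists (pickle (i, j, l)) => //; rewrite /row_pairs pickleK.
Qed.

Lemma borel_fun_row_pair_code : borel_fun row_pair_code.
Proof.
apply: borel_fun_RN => n; rewrite /row_pair_code /row_pairs /=.
by case: (odflt _ _) => -[i j] l; apply: measurable_pair_code; exact: measurable_entry.
Qed.

Lemma eq_plus_row_pair_codeP x y :
  eq_plus (row_pair_code x) (row_pair_code y) <-> range (row_pairs x) = range (row_pairs y).
Proof. rewrite eq_plusP; exact: range_comp_inj pair_code_inj. Qed.

End row_pairs.

Theorem claim1p6 (R : realType) :
  exists C : set (RNN R), comeager C /\
    exists f : RNN R -> RN R, borel_fun f /\
      forall x y, C x -> C y -> (eq_plus2 x y <-> eq_plus (f x) (f y)).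
Proof.
exists (@disjoint_rows R); split; first exact: comeager_disjoint_rows.
exists (@row_pair_code R); split; first exact: borel_fun_row_pair_code.
move=> x y Cx Cy; rewrite eq_plus2P eq_plus_row_pair_codeP !range_row_pairs.
have rows_nonempty (z : RNN R) i : range (z i) !=set0 by exists (z i 0%N), 0%N.
by apply: iff_sym; apply: bigcup_squares_eqP.
Qed.
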